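(* For every integer $n\ge1$, there exists an injective group homomorphism $D_{2^{n+1}}\hookrightarrow T\mathcal R_{2^n}(\mathbb F_2)$.
   Context: The Riordan group over $\mathbb F_2$ consists of pairs $(g,f)$ of formal power series over $\mathbb F_2$ with $g=1+\cdots$, $f=t+\cdots$, identified with lower triangular matrices $(d_{i,k})$, $d_{i,k}=[t^i]gf^k$, with matrix multiplication (equivalently $(g_1,f_1)(g_2,f_2)=(g_1\cdot(g_2\circ f_1),\,f_2\circ f_1)$). For $m\ge0$, $T\mathcal R_m(\mathbb F_2)$ is the finite group of $(m+1)\times(m+1)$ upper-left truncations $(d_{i,k})_{0\le i,k\le m}$ of these matrices. $D_{2^{q}}$ denotes the dihedral group $\langle r,s\mid r^{2^{q}}=s^2=1,\ rsr=s\rangle$ of order $2^{q+1}$. *)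

From mathcomp Require Import all_boot all_order all_algebra all_fingroup all_solvable.
Set Implicit Arguments. Unset Strict Implicit. Unset Printing Implicit Defensive.
Import GRing.Theory.
Local Open Scope ring_scope.

(* A matrix M : 'M['F_2]_(m.+1) lies in T R_m(F_2) iff it is the upper-left
   (m+1)x(m+1) truncation of a Riordan matrix (g,f) with g = 1 + ..., f = t + ...,
   i.e. M i k = [t^i] g f^k.  Only coefficients of degree <= m matter, so the
   power series g, f may be represented by polynomials. *)
Definition in_TR (m : nat) (M : 'M['F_2]_(m.+1)) : Prop :=
  exists g f : {poly 'F_2},
    [/\ g`_0 = 1, f`_0 = 0, f`_1 = 1 &
        forall i k : 'I_(m.+1), M i k = (g * f ^+ k)`_i].
Arguments in_TR : clear implicits.

From mathcomp Require Import all_boot all_order all_algebra all_fingroup all_solvable.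
From mathcomp Require Import ring zify.
Set Implicit Arguments. Unset Strict Implicit. Unset Printing Implicit Defensive.

(* The two generators are the Riordan matrices r = (1 + t, t) and
   s = (1, t (1 + t)^(N - 1)) with N = 2^n, truncated to size N + 1.  Over F_2,
   (1 + t)^(2^k) = 1 + t^(2^k), so r has order exactly 2N in T R_N, and
   t (1 + t)^(N - 1) is congruent to t / (1 + t) modulo t^(N + 1); since
   t |-> t / (1 + t) is an involution in characteristic 2, s and s r are
   involutions.  Two involutions whose product r has order q, the first of them
   lying outside <r>, generate a dihedral group of order 2 q. *)

Section Groups.
Variable gT : finGroupType.
Implicit Types x y : gT.
Local Open Scope group_scope.

Lemma order_prime_power x p k :
  prime p -> x ^+ (p ^ k.+1) = 1 -> x ^+ (p ^ k) != 1 -> #[x] = (p ^ k.+1)%N.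
Proof.
move=> p_pr xpk1.
have /(dvdn_pfactor _ _ p_pr) [j le_jk ox] : (#[x] %| p ^ k.+1)%N.
  by rewrite order_dvdn xpk1.
rewrite -order_dvdn ox dvdn_Pexp2l ?prime_gt1 // => gt_jk.
by have -> : j = k.+1 by lia.
Qed.

Lemma card_involutions_gen x y :
  #[x] = 2 -> #[y] = 2 -> x != y -> x \notin <[x * y]> ->
  #|<<[set x; y]>>| = (#[x * y]).*2.
Proof.
set G := <<_>>; set q := #[x * y] => ox oy ne_xy xy'x.
have q_gt0 : (0 < q)%N := order_gt0 _.
have q_gt1 : (1 < q)%N by rewrite order_gt1 -eq_invg_mul invg_expg ox.
have homG : G \homg 'D_q.*2.
  rewrite Grp'_dihedral //; apply/existsP; exists (x, y); rewrite /= !xpair_eqE.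
  by rewrite joing_idl joing_idr -{1}ox -oy !expg_order !eqxx.
have xyG : <[x * y]> \subset G.
  by rewrite cycle_subG groupM ?mem_gen ?set21 ?set22.
have lt_qG : (q < #|G|)%N.
  rewrite /q orderE proper_card //; apply/properP; split=> //.
  by exists x => //; rewrite mem_gen ?set21.
have [k oG] : exists k, #|G| = (k * q)%N by apply/dvdnP; rewrite cardSg.
have k_dvd2 : (k %| 2)%N.
  by rewrite -(dvdn_pmul2r q_gt0) mul2n -oG -(card_dihedral q_gt1) card_homg.
have k_gt1 : (1 < k)%N by rewrite -(ltn_pmul2r q_gt0) mul1n -oG.
have le_k2 := dvdn_leq (isT : (0 < 2)%N) k_dvd2.
by rewrite oG (_ : k = 2) ?mul2n //; lia.
Qed.
End Groups.

Import GRing.Theory.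
Local Open Scope ring_scope.

Lemma big_ord_vanish (V : nmodType) (F : nat -> V) a b : (a <= b)%N ->
  (forall j, (a <= j < b)%N -> F j = 0) -> \sum_(j < b) F j = \sum_(j < a) F j.
Proof.
move=> le_ab F0; rewrite [RHS](big_ord_widen _ _ le_ab) [RHS]big_mkcond /=.
by apply: eq_bigr => j _; case: ltnP => // le_aj; rewrite F0 ?le_aj ?ltn_ord.
Qed.

Lemma coef0_X1_exp (R : comNzRingType) k : ((('X + 1) ^+ k : {poly R}))`_0 = 1.
Proof.
by rewrite -horner_coef0 horner_exp hornerD hornerX hornerC add0r expr1n.
Qed.

Lemma coef1_X1_exp (R : comNzRingType) k : ((('X + 1) ^+ k : {poly R}))`_1 = k%:R.
Proof.
elim: k => [|k IHk]; first by rewrite coefC.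
by rewrite exprSr mulrDr mulr1 coefD coefMX /= coef0_X1_exp IHk -natr1 addrC.
Qed.

Section RiordanMatrix.
Variable R : idomainType.
Implicit Types g f h p q : {poly R}.

Definition eqmodX (m : nat) p q := 'X^m %| p - q.

Lemma eqmodX_refl m p : eqmodX m p p.
Proof. by rewrite /eqmodX subrr dvdp0. Qed.

Lemma eqmodX_trans m p q r : eqmodX m p q -> eqmodX m q r -> eqmodX m p r.
Proof. by move=> pq qr; rewrite /eqmodX -(subrKA q); apply: dvdp_add. Qed.

Lemma eqmodXD m p p' q q' :
  eqmodX m p p' -> eqmodX m q q' -> eqmodX m (p + q) (p' + q').
Proof. by move=> pp qq; rewrite /eqmodX opprD addrACA; apply: dvdp_add. Qed.

Lemma eqmodXM m p p' q q' :
  eqmodX m p p' -> eqmodX m q q' -> eqmodX m (p * q) (p' * q').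
Proof.
move=> pp qq; rewrite /eqmodX -(subrKA (p * q')) -mulrBr -mulrBl.
by apply: dvdp_add; [apply: dvdp_mull | apply: dvdp_mulr].
Qed.

Lemma eqmodXX m p p' k : eqmodX m p p' -> eqmodX m (p ^+ k) (p' ^+ k).
Proof.
move=> pp; elim: k => [|k IHk]; first exact: eqmodX_refl.
by rewrite !exprS eqmodXM.
Qed.

Lemma eqmodX_coef m p q i : eqmodX m p q -> (i < m)%N -> p`_i = q`_i.
Proof.
move=> /(Pdiv.IdomainMonic.dvdpP (monicXn R m)) [r /eqP].
by rewrite subr_eq => /eqP -> lt_im; rewrite coefD coefMXn lt_im add0r.
Qed.

Lemma coef_mul_exp_lt h f i j : 'X %| f -> (i < j)%N -> (h * f ^+ j)`_i = 0.
Proof.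
move=> Xf lt_ij; have : 'X^j %| h * f ^+ j by apply/dvdp_mull/dvdp_exp2r.
by case/(Pdiv.IdomainMonic.dvdpP (monicXn R j)) => r ->; rewrite coefMXn lt_ij.
Qed.

Lemma coef_mul_comp h q f i : 'X %| f ->
  (h * (q \Po f))`_i = \sum_(j < i.+1) q`_j * (h * f ^+ j)`_i.
Proof.
move=> Xf; rewrite comp_polyE mulr_sumr coef_sum.
under eq_bigr do rewrite -scalerAr coefZ.
pose F j := q`_j * (h * f ^+ j)`_i; pose b := maxn (size q) i.+1.
rewrite -(@big_ord_vanish _ F _ b) ?leq_maxl //; last first.
  by move=> j /andP [le_qj _]; rewrite /F nth_default ?mul0r.
rewrite (@big_ord_vanish _ F i.+1 b) ?leq_maxr // => j /andP [lt_ij _].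
by rewrite /F coef_mul_exp_lt ?mulr0.
Qed.

Lemma dvdpX_coef0 f : ('X %| f) = (f`_0 == 0).
Proof. by rewrite -['X]subr0 -polyC0 dvdp_XsubCl /root horner_coef0. Qed.

Definition riordan_mx m g f : 'M[R]_m.+1 := \matrix_(i, k) (g * f ^+ k)`_i.

Lemma riordan_mx1 m : riordan_mx m 1 'X = 1%:M.
Proof.
by apply/matrixP => i k; rewrite !mxE mul1r coefXn -val_eqE.
Qed.

Lemma riordan_mxM m g1 f1 g2 f2 : 'X %| f1 ->
  riordan_mx m g1 f1 *m riordan_mx m g2 f2 =
  riordan_mx m (g1 * (g2 \Po f1)) (f2 \Po f1).
Proof.
move=> Xf1; apply/matrixP => i k; rewrite !mxE -mulrA -rmorphXn -rmorphM.
rewrite coef_mul_comp //=.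
under eq_bigr do rewrite !mxE mulrC.
pose F j := (g2 * f2 ^+ k)`_j * (g1 * f1 ^+ j)`_i.
rewrite (@big_ord_vanish _ F i.+1) ?ltn_ord // => j /andP [lt_ij _].
by rewrite /F (coef_mul_exp_lt _ Xf1 lt_ij) mulr0.
Qed.

Lemma eq_riordan_mx m g g' f f' :
  eqmodX m.+1 g g' -> eqmodX m.+1 f f' -> riordan_mx m g f = riordan_mx m g' f'.
Proof.
move=> gg ff; apply/matrixP => i k; rewrite !mxE.
by apply: eqmodX_coef (ltn_ord i); apply/eqmodXM/eqmodXX.
Qed.

End RiordanMatrix.

Local Notation P := {poly 'F_2}.

Lemma in_TR_riordan_mx m (g f : P) :
  g`_0 = 1 -> f`_0 = 0 -> f`_1 = 1 -> in_TR m (riordan_mx m g f).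
Proof. by move=> g0 f0 f1; exists g, f; split=> // i k; rewrite mxE. Qed.

Lemma in_TR1 m : in_TR m 1%:M.
Proof.
by rewrite -riordan_mx1; apply: in_TR_riordan_mx; rewrite ?coefC ?coefX.
Qed.

Lemma in_TR_mul m M M' : in_TR m M -> in_TR m M' -> in_TR m (M *m M').
Proof.
move=> [g1 [f1 [g10 f10 f11 defM]]] [g2 [f2 [g20 f20 f21 defM']]].
have -> : M = riordan_mx m g1 f1 by apply/matrixP => i k; rewrite mxE defM.
have -> : M' = riordan_mx m g2 f2 by apply/matrixP => i k; rewrite mxE defM'.
have Xf1 : 'X %| f1 by rewrite dvdpX_coef0 f10.
rewrite riordan_mxM //; apply: in_TR_riordan_mx.
- by rewrite coef_mul_comp // big_ord1 expr0 mulr1 g10 g20 mulr1.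
- by rewrite -[f2 \Po f1]mul1r coef_mul_comp // big_ord1 f20 mul0r.
- rewrite -[f2 \Po f1]mul1r coef_mul_comp // !big_ord_recr big_ord0 /= f20 f21.
  by rewrite mul0r add0r !mul1r expr1 add0r f11.
Qed.

Lemma in_TR_gen m (A : {set {'GL_m.+1['F_2]}}) :
  {in A, forall a : {'GL_m.+1['F_2]}, in_TR m (GLval a)} ->
  {in <<A>>%g, forall x : {'GL_m.+1['F_2]}, in_TR m (GLval x)}.
Proof.
move=> in_TR_A x /gen_prodgP [k [c Ac ->]].
elim/big_ind: _ => [|a b|i _]; first exact: in_TR1.
  by rewrite GL_MxE; apply: in_TR_mul.
exact: in_TR_A.
Qed.

Lemma pchar2_poly : 2%N \in [pchar P].
Proof. by rewrite pchar_poly (pchar_Fp (p := 2)). Qed.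

Lemma exprD_pow2 (p q : P) e : (p + q) ^+ (2 ^ e) = p ^+ (2 ^ e) + q ^+ (2 ^ e).
Proof. by apply: exprDn_pchar; rewrite pnatX pnatE ?pchar2_poly. Qed.

Definition rot_mx m j : 'M['F_2]_m.+1 := riordan_mx m (('X + 1) ^+ j) 'X.

Definition refl_series m : P := 'X * ('X + 1) ^+ m.-1.

Definition refl_mx m : 'M['F_2]_m.+1 := riordan_mx m 1 (refl_series m).

Lemma refl_series_coef0 m : (refl_series m)`_0 = 0.
Proof. by rewrite coefXM. Qed.

Lemma refl_series_coef1 m : (refl_series m)`_1 = 1.
Proof. by rewrite coefXM coef0_X1_exp. Qed.

Lemma dvdpX_refl_series m : 'X %| refl_series m.
Proof. by rewrite dvdpX_coef0 refl_series_coef0. Qed.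

Lemma refl_series_comp m q : refl_series m \Po q = q * (q + 1) ^+ m.-1.
Proof. by rewrite rmorphM rmorphXn rmorphD /= comp_polyX rmorph1. Qed.

Lemma rot_mxD m a b : rot_mx m a *m rot_mx m b = rot_mx m (a + b).
Proof. by rewrite /rot_mx riordan_mxM ?dvdpp // !comp_polyXr exprD. Qed.

Lemma rot_mx0 m : rot_mx m 0 = 1%:M.
Proof. exact: riordan_mx1. Qed.

Lemma rot_mx_pow2 n : rot_mx (2 ^ n) (2 ^ n.+1) = 1%:M.
Proof.
rewrite -riordan_mx1; apply: eq_riordan_mx (eqmodX_refl _ _).
rewrite exprD_pow2 expr1n /eqmodX addrK dvdp_exp2l // expnS.
by have := expn_gt0 2 n; lia.
Qed.

Lemma rot_mx_pow2_neq1 n : rot_mx (2 ^ n) (2 ^ n) != 1%:M.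
Proof.
apply/eqP => /matrixP /(_ ord_max ord0); rewrite !mxE exprD_pow2 expr1n mulr1.
rewrite coefD coefXn coefC eqxx -val_eqE /= expn_eq0 addr0.
by move/eqP; rewrite oner_eq0.
Qed.

Section Reflection.
Variable n : nat.
Local Notation N := (2 ^ n)%N.
Local Notation f := (refl_series N).

Lemma refl_series_X1 : eqmodX N.+1 (('X + 1) * f) 'X.
Proof.
rewrite /refl_series mulrCA -exprS prednK ?expn_gt0 // exprD_pow2 expr1n.
by rewrite mulrDr mulr1 -exprS /eqmodX addrK dvdpp.
Qed.

Lemma refl_series1_X1 : eqmodX N.+1 (('X + 1) * (f + 1)) 1.
Proof.
rewrite mulrDr mulr1.
apply: eqmodX_trans (eqmodXD refl_series_X1 (eqmodX_refl _ ('X + 1))) _.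
by rewrite addrA addrr_pchar2 ?pchar2_poly // add0r eqmodX_refl.
Qed.

(* (1 + X)^N (f o f) = ((1 + X) f) ((1 + X) (f + 1))^(N - 1) is congruent to X,
   and multiplying by (1 + X)^N = 1 + X^N does not change f o f modulo X^(N+1). *)
Lemma refl_seriesK : eqmodX N.+1 (f \Po f) 'X.
Proof.
have Xff : 'X %| f \Po f by rewrite refl_series_comp dvdp_mulr ?dvdpX_refl_series.
have : eqmodX N.+1 (('X + 1) ^+ N * (f \Po f)) 'X.
  have -> : ('X + 1) ^+ N * (f \Po f) =
            (('X + 1) * f) * (('X + 1) * (f + 1)) ^+ N.-1.
    rewrite refl_series_comp {2}/refl_series -{1}(prednK (expn_gt0 2 n)).
    by rewrite exprS exprMn; ring.
  have := eqmodXM refl_series_X1 (eqmodXX N.-1 refl_series1_X1).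
  by rewrite expr1n mulr1.
apply: eqmodX_trans; rewrite exprD_pow2 expr1n mulrDl mul1r /eqmodX.
by rewrite opprD addrCA subrr addr0 dvdpNr exprSr dvdp_mul.
Qed.

Lemma refl_mx_invol : refl_mx N *m refl_mx N = 1%:M.
Proof.
rewrite /refl_mx riordan_mxM ?dvdpX_refl_series // rmorph1 mulr1 -riordan_mx1.
exact: eq_riordan_mx (eqmodX_refl _ _) refl_seriesK.
Qed.

Lemma refl_rot_mx : refl_mx N *m rot_mx N 1 = riordan_mx N (f + 1) f.
Proof.
rewrite riordan_mxM ?dvdpX_refl_series // mul1r expr1.
by rewrite rmorphD rmorph1 /= !comp_polyX.
Qed.

Lemma refl_rot_mx_invol :
  (refl_mx N *m rot_mx N 1) *m (refl_mx N *m rot_mx N 1) = 1%:M.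
Proof.
rewrite refl_rot_mx riordan_mxM ?dvdpX_refl_series // -riordan_mx1.
apply: eq_riordan_mx refl_seriesK; rewrite rmorphD rmorph1 /= mulrC.
apply: eqmodX_trans refl_series1_X1.
exact: eqmodXM (eqmodXD refl_seriesK (eqmodX_refl _ 1)) (eqmodX_refl _ _).
Qed.

(* The entries (1, 0) and (2, 1) of r^j are both j, those of s are 0 and N - 1. *)
Lemma refl_mx_neq_rot j : (0 < n)%N -> refl_mx N != rot_mx N j.
Proof.
move=> n_gt0; have N_gt1 : (2 < N.+1)%N by rewrite ltnS -(expn1 2) leq_exp2l.
apply/eqP => /matrixP eq_mx.
move: (eq_mx (inord 1) (inord 0)) (eq_mx (inord 2) (inord 1)).
rewrite !mxE !inordK // ?(ltn_trans _ N_gt1) // !expr0 !expr1 !mulr1 !mul1r.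
rewrite coefC coefMX /refl_series coefXM /=.
rewrite !coef1_X1_exp => <-; rewrite -subn1 -(Fp_nat_mod (isT : prime 2)) modn2.
by rewrite oddB ?expn_gt0 // oddX eqn0Ngt n_gt0 => /eqP; rewrite oner_eq0.
Qed.
End Reflection.

Section Embedding.
Variable n : nat.
Hypothesis n_gt0 : (0 < n)%N.
Local Notation N := (2 ^ n)%N.
Local Open Scope group_scope.

Lemma rot_mx_unit : rot_mx N 1 \is a GRing.unit.
Proof.
apply: (proj1 (@mulmx1_unit _ _ _ (rot_mx N (2 ^ n.+1).-1) _)).
by rewrite rot_mxD add1n prednK ?expn_gt0 // rot_mx_pow2.
Qed.

Lemma refl_mx_unit : refl_mx N \is a GRing.unit.
Proof. exact: proj1 (mulmx1_unit (refl_mx_invol n)). Qed.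

Definition rotGL : {'GL_N.+1['F_2]} := FinRing.Unit rot_mx_unit.
Definition reflGL : {'GL_N.+1['F_2]} := FinRing.Unit refl_mx_unit.

Lemma rotGL_exp j : val (rotGL ^+ j) = rot_mx N j.
Proof.
elim: j => [|j IHj]; first by rewrite rot_mx0.
by rewrite expgSr -[LHS]/(GLval _) GL_MxE IHj rot_mxD addn1.
Qed.

Lemma order_rotGL : #[rotGL] = (2 ^ n.+1)%N.
Proof.
apply: order_prime_power => //.
  by apply: val_inj; rewrite rotGL_exp rot_mx_pow2.
by apply: contra_neq (rot_mx_pow2_neq1 n) => /(congr1 val); rewrite rotGL_exp.
Qed.

Lemma reflGL_notin_rot : reflGL \notin <[rotGL]>.
Proof.
apply/cycleP => -[j /(congr1 val)].
by rewrite /= rotGL_exp; apply/eqP/refl_mx_neq_rot.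
Qed.

Lemma order_reflGL : #[reflGL] = 2%N.
Proof.
apply: (@order_prime_power _ _ 2 0) => //.
  exact/val_inj/(refl_mx_invol n).
by rewrite expg1; apply: contraNneq reflGL_notin_rot => ->; rewrite group1.
Qed.

Lemma order_refl_rotGL : #[reflGL * rotGL] = 2%N.
Proof.
apply: (@order_prime_power _ _ 2 0) => //.
  exact/val_inj/(refl_rot_mx_invol n).
rewrite expg1; apply: contraNneq reflGL_notin_rot => /eqP.
by rewrite -eq_invg_mul => /eqP <-; rewrite cycleV cycle_id.
Qed.

Lemma reflGL_mulK : reflGL * (reflGL * rotGL) = rotGL.
Proof.
rewrite mulgA (_ : reflGL * reflGL = 1) ?mul1g //.
exact/val_inj/(refl_mx_invol n).
Qed.

Lemma dihedral_isog_reflGL_gen :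
  'D_(2 ^ n.+2) \isog <<[set reflGL; reflGL * rotGL]>>.
Proof.
have ne_s_sr : reflGL != reflGL * rotGL.
  rewrite -{1}[reflGL]mulg1 (can_eq (mulKg _)) eq_sym -order_eq1 order_rotGL.
  by rewrite -(expn0 2) eqn_exp2l.
have := involutions_gen_dihedral order_reflGL order_refl_rotGL ne_s_sr.
by rewrite card_involutions_gen ?order_reflGL ?order_refl_rotGL ?reflGL_mulK
  ?reflGL_notin_rot // order_rotGL -mul2n -expnS isog_sym.
Qed.

Lemma in_TR_reflGL_gen :
  {in <<[set reflGL; reflGL * rotGL]>>,
    forall x : {'GL_N.+1['F_2]}, in_TR N (GLval x)}.
Proof.
apply: in_TR_gen => _ /set2P [->|->].
  apply: in_TR_riordan_mx;
  by rewrite ?coefC ?refl_series_coef0 ?refl_series_coef1.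
rewrite GL_MxE refl_rot_mx; apply: in_TR_riordan_mx.
- by rewrite coefD refl_series_coef0 coefC add0r.
- exact: refl_series_coef0.
- exact: refl_series_coef1.
Qed.

End Embedding.

Theorem theorem12 (n : nat) (hn : (1 <= n)%N) :
  exists phi : gsort 'D_(2 ^ n.+2) -> 'M['F_2]_((2 ^ n).+1),
    [/\ injective phi,
        phi 1%g = (1%:M)%R,
        (forall x y : gsort 'D_(2 ^ n.+2), phi (x * y)%g = (phi x *m phi y)%R) &
        (forall x, in_TR (2 ^ n) (phi x))].
Proof.
have /isogP [f inj_f im_f] := dihedral_isog_reflGL_gen hn.
exists (fun x => GLval (f x)); split.
- move=> x y eq_fxy; apply: (injmP inj_f); rewrite ?inE //; exact: val_inj.
- by rewrite morph1.
- by move=> x y; rewrite morphM ?inE.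
- by move=> x; apply: in_TR_reflGL_gen; rewrite -im_f mem_morphim ?inE.
Qed.
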